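(* Let $\star$ be a $t$-definer, let $(X_1,d_1^\star),\dots,(X_n,d_n^\star)$ be $\star$-metric spaces with $d_i^\star(x,y)\le 1$ for all $x,y\in X_i$ and $1\le i\le n$, and let $X=\bigoplus_{i=1}^n X_i$ be their disjoint union. Define $d_q^\star$ on $X$ by $d_q^\star(x,y)=d_i^\star(x,y)$ if $x,y\in X_i$ for some $i$, and $d_q^\star(x,y)=1$ otherwise. Then $(X,d_q^\star)$ is totally bounded if and only if every $(X_i,d_i^\star)$ is totally bounded.
   Context: A $t$-definer is a function $\star:[0,\infty)\times[0,\infty)\to[0,\infty)$ such that for all $a,b,c\ge 0$: $a\star b=b\star a$; $a\star(b\star c)=(a\star b)\star c$; if $a\le b$ then $a\star c\le b\star c$; $a\star 0=a$; and $\star$ is continuous in its first variable with respect to the Euclidean topology. Given a nonempty set $Y$, a $\star$-metric on $Y$ is a function $\rho:Y\times Y\to[0,\infty)$ such that for all $x,y,z\in Y$: $\rho(x,y)=0$ iff $x=y$; $\rho(x,y)=\rho(y,x)$; and $\rho(x,y)\le \rho(x,z)\star \rho(z,y)$. Under the stated bound, $d_q^\star$ is a $\star$-metric on $X$. A $\star$-metric space $(Y,\rho)$ is totally bounded if for every $\epsilon>0$ there is a finite set $F\subseteq Y$ with $Y=\bigcup_{x\in F}\{y\in Y:\rho(x,y)<\epsilon\}$. *)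

From Stdlib Require Import Reals Arith List.
Open Scope R_scope.

(* A t-definer: an operation on [0,oo), represented as R -> R -> R whose
   axioms are required on nonnegative arguments (and which maps [0,oo)^2
   into [0,oo)). *)
Definition t_definer (star : R -> R -> R) : Prop :=
  (forall a b, 0 <= a -> 0 <= b -> 0 <= star a b) /\
  (forall a b, 0 <= a -> 0 <= b -> star a b = star b a) /\
  (forall a b c, 0 <= a -> 0 <= b -> 0 <= c ->
     star a (star b c) = star (star a b) c) /\
  (forall a b c, 0 <= a -> 0 <= b -> 0 <= c -> a <= b -> star a c <= star b c) /\
  (forall a, 0 <= a -> star a 0 = a) /\
  (forall c a, 0 <= c -> 0 <= a -> forall eps, 0 < eps ->
     exists delta, 0 < delta /\
       forall a', 0 <= a' -> Rabs (a' - a) < delta ->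
         Rabs (star a' c - star a c) < eps).

Definition star_metric (star : R -> R -> R) (Y : Type) (rho : Y -> Y -> R) : Prop :=
  inhabited Y /\
  (forall x y, 0 <= rho x y) /\
  (forall x y, rho x y = 0 <-> x = y) /\
  (forall x y, rho x y = rho y x) /\
  (forall x y z, rho x y <= star (rho x z) (rho z y)).

Definition totally_bounded (Y : Type) (rho : Y -> Y -> R) : Prop :=
  forall eps, 0 < eps ->
    exists F : list Y, forall y : Y, exists x, In x F /\ rho x y < eps.

(* Index set {0, ..., n-1} (standing for {1, ..., n}). *)
Definition Idx (n : nat) : Type := { i : nat | (i < n)%nat }.

Lemma Idx_eq_dec (n : nat) (i j : Idx n) : {i = j} + {i <> j}.
Proof.
  destruct i as [i Hi], j as [j Hj].
  destruct (Nat.eq_dec i j) as [e|ne].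
  - left. subst j. f_equal. apply Peano_dec.le_unique.
  - right. intros H. apply ne. now inversion H.
Defined.

Definition disj_union (n : nat) (X : Idx n -> Type) : Type := { i : Idx n & X i }.

Definition d_q (n : nat) (X : Idx n -> Type) (d : forall i, X i -> X i -> R)
  (x y : disj_union n X) : R :=
  match Idx_eq_dec n (projT1 x) (projT1 y) with
  | left e => d (projT1 y) (eq_rect _ X (projT2 x) _ e) (projT2 y)
  | right _ => 1
  end.

(* Points of distinct components are at distance 1, so for eps <= 1 an eps-net
   of X can only cover a point of X_i by points of X_i, and its X_i-part is an
   eps-net of X_i.  Conversely, the union of eps-nets of the finitely many X_i
   is an eps-net of X.  Neither the t-definer nor the star-metric axioms nor the
   bound d_i <= 1 enter the equivalence; they only make d_q a star-metric. *)

From Stdlib Require Import Reals Arith List Lra Lia Eqdep_dec.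
Open Scope R_scope.

Lemma Idx_listing (n : nat) : exists l : list (Idx n), forall i, In i l.
Proof.
  enough (Hk : forall k, exists l : list (Idx n),
             forall i, (proj1_sig i < k)%nat -> In i l).
  { destruct (Hk n) as [l Hl]. exists l. intros i. apply Hl, proj2_sig. }
  induction k as [|k [l Hl]].
  - exists nil. intros i Hi. lia.
  - destruct (lt_dec k n) as [Hkn|Hkn].
    + exists (exist _ k Hkn :: l). intros [j Hj] Hjk; simpl in Hjk.
      destruct (Nat.eq_dec j k) as [->|Hjk'].
      * left. f_equal. apply Peano_dec.le_unique.
      * right. apply Hl. simpl. lia.
    + exists l. intros [j Hj] _. apply Hl. simpl. lia.
Qed.

Section DisjointUnion.

Variables (n : nat) (X : Idx n -> Type) (d : forall i, X i -> X i -> R).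

Lemma d_q_same_index (i : Idx n) (x y : X i) :
  d_q n X d (existT X i x) (existT X i y) = d i x y.
Proof.
  unfold d_q; simpl. destruct (Idx_eq_dec n i i) as [e|ne].
  - now rewrite (UIP_dec (Idx_eq_dec n) e eq_refl).
  - contradiction.
Qed.

Lemma d_q_lt1_same_index (x y : disj_union n X) :
  d_q n X d x y < 1 -> projT1 x = projT1 y.
Proof.
  unfold d_q. destruct (Idx_eq_dec n (projT1 x) (projT1 y)) as [e|_]; [easy|lra].
Qed.

Definition fiber (i : Idx n) (F : list (disj_union n X)) : list (X i) :=
  flat_map (fun x => match Idx_eq_dec n (projT1 x) i with
                     | left e => eq_rect _ X (projT2 x) i e :: nil
                     | right _ => nil
                     end) F.

Lemma In_fiber (i : Idx n) (y : X i) (F : list (disj_union n X)) :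
  In (existT X i y) F -> In y (fiber i F).
Proof.
  intros Hy. apply in_flat_map. exists (existT X i y). split; [exact Hy|].
  simpl. destruct (Idx_eq_dec n i i) as [e|ne]; [|contradiction].
  rewrite (UIP_dec (Idx_eq_dec n) e eq_refl). now left.
Qed.

Lemma totally_bounded_component (i : Idx n) :
  totally_bounded (disj_union n X) (d_q n X d) -> totally_bounded (X i) (d i).
Proof.
  intros Htb eps Heps.
  destruct (Htb (Rmin eps 1)) as [F HF]; [now apply Rmin_glb_lt; lra|].
  exists (fiber i F). intros y.
  destruct (HF (existT X i y)) as [[j x] [Hx Hxy]].
  pose proof (Rmin_l eps 1) as Hmin_eps. pose proof (Rmin_r eps 1) as Hmin_1.
  assert (Hj : j = i)
    by exact (d_q_lt1_same_index _ _ (Rlt_le_trans _ _ _ Hxy Hmin_1)).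
  subst j. rewrite d_q_same_index in Hxy.
  exists x. split; [now apply In_fiber | lra].
Qed.

Lemma net_of_component_nets (eps : R) (l : list (Idx n)) :
  (forall i, exists F : list (X i), forall y, exists x, In x F /\ d i x y < eps) ->
  exists L : list (disj_union n X), forall i (y : X i), In i l ->
    exists x, In x L /\ d_q n X d x (existT X i y) < eps.
Proof.
  intros Hnets. induction l as [|i l [L HL]].
  - exists nil. intros i y [].
  - destruct (Hnets i) as [F HF].
    exists (map (existT X i) F ++ L). intros j y [<-|Hj].
    + destruct (HF y) as [x [Hx Hxy]]. exists (existT X i x). split.
      * apply in_or_app. left. now apply in_map.
      * now rewrite d_q_same_index.
    + destruct (HL j y Hj) as [x [Hx Hxy]]. exists x. split; [|exact Hxy].
      apply in_or_app. now right.
Qed.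

Lemma totally_bounded_disj_union :
  (forall i, totally_bounded (X i) (d i)) ->
  totally_bounded (disj_union n X) (d_q n X d).
Proof.
  intros Htb eps Heps.
  destruct (Idx_listing n) as [l Hl].
  destruct (net_of_component_nets eps l) as [L HL].
  { intros i. now apply Htb. }
  exists L. intros [i y]. now apply HL.
Qed.

End DisjointUnion.

Theorem theorem3p9 (star : R -> R -> R) (n : nat) (X : Idx n -> Type)
  (d : forall i : Idx n, X i -> X i -> R) :
  t_definer star ->
  (1 <= n)%nat ->
  (forall i, star_metric star (X i) (d i)) ->
  (forall i (x y : X i), d i x y <= 1) ->
  (totally_bounded (disj_union n X) (d_q n X d) <->
   forall i, totally_bounded (X i) (d i)).
Proof.
  intros _ _ _ _. split.
  - intros Htb i. now apply totally_bounded_component.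
  - apply totally_bounded_disj_union.
Qed.
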